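(* Let $b_1\ge b_2\ge\cdots\ge b_m>0$ be real numbers and let $k\in[m-1]$. Then $$1-\frac km\le\delta_k:=\frac{\sum_{S\subset[m-1],|S|=k}\mathbf{b}^S}{\sum_{S\subset[m],|S|=k}\mathbf{b}^S}\le\min\Big\{1,\frac{b_1}{b_m}\Big(1-\frac km\Big)\Big\}.$$
   Context: For $S\subset[m]$, $\mathbf{b}^S=\prod_{i\in S}b_i$. *)

From mathcomp Require Import all_boot all_order all_algebra.
Set Implicit Arguments. Unset Strict Implicit. Unset Printing Implicit Defensive.
Import Order.TTheory GRing.Theory Num.Theory.
Local Open Scope ring_scope.

Definition bpow (R : realFieldType) (m : nat) (b : 'I_m -> R) (S : {set 'I_m}) : R :=
  \prod_(i in S) b i.

Definition esum_all (R : realFieldType) (m : nat) (b : 'I_m -> R) (k : nat) : R :=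
  \sum_(S : {set 'I_m} | #|S| == k) bpow b S.

(* sum over k-subsets of [m-1], i.e. subsets avoiding the last index ord_max *)
Definition esum_drop_last (R : realFieldType) (n : nat) (b : 'I_n.+1 -> R) (k : nat) : R :=
  \sum_(S : {set 'I_n.+1} | (#|S| == k) && (ord_max \notin S)) bpow b S.

Definition delta (R : realFieldType) (n : nat) (b : 'I_n.+1 -> R) (k : nat) : R :=
  esum_drop_last b k / esum_all b k.

(* Write e_i for the sum of b^S over the k-subsets S of [m] avoiding i, so that
   delta_k = e_m / e with e the sum over all k-subsets. Every k-subset avoids
   exactly m - k indices, hence sum_i e_i = (m - k) e. The transposition (i m)
   maps the k-subsets avoiding m onto those avoiding i and changes b^S by
   replacing at most one factor b_i with b_m; as b_m is the least and b_1 the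
   largest entry, e_i <= e_m and b_m e_m <= b_1 e_i. Summing over i gives
   (m - k) e <= m e_m and m b_m e_m <= b_1 (m - k) e. *)

From mathcomp Require Import all_boot all_order all_algebra all_fingroup.
Set Implicit Arguments.
Unset Strict Implicit.
Unset Printing Implicit Defensive.
Import Order.TTheory GRing.Theory Num.Theory.
Local Open Scope ring_scope.

Section Avoiding.
Variables (R : realFieldType) (m : nat).
Implicit Types (b c : 'I_m -> R) (S : {set 'I_m}).

Definition esum_avoid b (k : nat) (i : 'I_m) : R :=
  \sum_(S : {set 'I_m} | (#|S| == k) && (i \notin S)) bpow b S.

(* [esum_drop_last b k] is convertible to [esum_avoid b k ord_max]. *)

Lemma bpow_ge0 b S : (forall i, 0 <= b i) -> 0 <= bpow b S.
Proof. by move=> b_ge0; apply: prodr_ge0. Qed.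

Lemma esum_all_gt0 b k :
  (forall i, 0 < b i) -> (k <= m)%N -> 0 < esum_all b k.
Proof.
move=> b_gt0; rewrite -[m in (k <= m)%N]card_ord.
move=> /card_geqP[s [s_uniq s_size _]].
have card_s : #|[set:: s]| == k by rewrite cardsE (card_uniqP s_uniq) s_size.
rewrite /esum_all (bigD1 [set:: s]) //= ltr_pwDl ?prodr_gt0 //.
by apply: sumr_ge0 => S _; apply: bpow_ge0 => i; apply: ltW.
Qed.

Lemma sum_esum_avoid b k :
  \sum_i esum_avoid b k i = (m - k)%:R * esum_all b k.
Proof.
rewrite /esum_avoid; under eq_bigr => i _ do rewrite big_mkcondr /=.
rewrite exchange_big /esum_all mulr_sumr; apply: eq_bigr => S /eqP card_S.
rewrite -big_mkcond /= sumr_const mulr_natl; congr (_ *+ _).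
have := cardsC S; rewrite card_S card_ord => m_eq.
by rewrite -[in RHS]m_eq addKn; apply: eq_card => i; rewrite inE.
Qed.

Lemma esum_avoid_perm b k (s : {perm 'I_m}) i :
  esum_avoid b k (s i) = esum_avoid (b \o s) k i.
Proof.
have inj_s := @perm_inj _ s.
rewrite /esum_avoid (reindex_inj (imset_inj inj_s)); apply: eq_big => S.
  by rewrite card_imset // mem_imset.
by move=> _; rewrite /bpow big_imset //= => x y _ _; apply: inj_s.
Qed.

Lemma bpow_swap_le b c i S :
  {in S, forall x, 0 <= b x} -> {in S, forall x, x != i -> c x = b x} ->
  c i <= b i -> c i * bpow b S <= b i * bpow c S.
Proof.
move=> b_ge0 cb ci_le; rewrite /bpow; case iS : (i \in S).
  rewrite !(bigD1 i iS) /= mulrCA [X in _ <= _ * (_ * X)](eq_bigr b) //.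
  by move=> x /andP[xS xi]; rewrite cb.
rewrite [X in _ <= _ * X](eq_bigr b) => [|x xS].
  by rewrite ler_wpM2r ?prodr_ge0.
by apply: cb => //; apply: contraFneq iS => <-.
Qed.

Lemma esum_avoid_le_all b k i :
  (forall x, 0 <= b x) -> esum_avoid b k i <= esum_all b k.
Proof.
move=> b_ge0; rewrite /esum_all (bigID (fun S => i \notin S)) /= lerDl.
by apply: sumr_ge0 => S _; apply: bpow_ge0.
Qed.

End Avoiding.

Section Decreasing.
Variables (R : realFieldType) (n : nat) (b : 'I_n.+1 -> R) (k : nat).
Hypothesis b_decr : forall i j : 'I_n.+1, (i <= j)%N -> b j <= b i.
Hypothesis b_gt0 : forall i, 0 < b i.

Let b_ge0 i : 0 <= b i. Proof. exact: ltW. Qed.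
Let b_ge_last i : b ord_max <= b i. Proof. by apply: b_decr; rewrite -ltnS. Qed.

Lemma esum_avoid_le_drop_last i : esum_avoid b k i <= esum_drop_last b k.
Proof.
rewrite -(tpermR i ord_max) esum_avoid_perm; apply: ler_sum => S /andP[_ S_max].
apply: ler_prod => x xS; rewrite b_ge0 /=.
case: tpermP => [_ | x_max | //]; first exact: b_ge_last.
by move: S_max; rewrite -x_max xS.
Qed.

Lemma esum_drop_last_le_avoid i :
  b ord_max * esum_drop_last b k <= b ord0 * esum_avoid b k i.
Proof.
rewrite -(tpermR i ord_max) esum_avoid_perm !mulr_sumr.
apply: ler_sum => S /andP[_ S_max].
have := bpow_swap_le (c := b \o tperm i ord_max) (i := i) (S := S) (in1W b_ge0).
rewrite /= tpermL => /(_ _ (b_ge_last i)) swap_le.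
apply: le_trans (swap_le _) _.
  move=> x xS x_i; rewrite /= tpermD 1?eq_sym //.
  by apply: contraNneq S_max => <-.
by apply: ler_wpM2r; [apply: bpow_ge0 => x; exact: b_ge0 | exact: b_decr].
Qed.

End Decreasing.

Theorem lemma2p4 (R : realFieldType) (n : nat) (b : 'I_n.+1 -> R) (k : nat) :
  (forall i j : 'I_n.+1, (i <= j)%N -> b j <= b i) ->
  (forall i, 0 < b i) ->
  (1 <= k <= n)%N ->
  1 - k%:R / n.+1%:R <= delta b k /\
  delta b k <= Num.min 1 (b ord0 / b ord_max * (1 - k%:R / n.+1%:R)).
Proof.
move=> b_decr b_gt0 /andP[_ k_le_n].
set D := esum_drop_last b k; set E := esum_all b k; set c := 1 - _.
have E_gt0 : 0 < E by apply: esum_all_gt0 => //; apply: leqW.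
have D_le_E : D <= E by apply: esum_avoid_le_all => i; apply: ltW.
have mc : (n.+1 - k)%:R = n.+1%:R * c :> R.
  rewrite natrB ?(leqW k_le_n) // /c mulrBr mulr1 mulrCA.
  by rewrite divff ?mulr1 ?pnatr_eq0.
have cE_le_D : c * E <= D.
  have : \sum_i esum_avoid b k i <= \sum_(i < n.+1) D.
    by apply: ler_sum => i _; apply: esum_avoid_le_drop_last.
  rewrite sum_esum_avoid sumr_const card_ord -[D *+ _]mulr_natl mc.
  by rewrite -mulrA ler_pM2l.
have bD_le_bcE : b ord_max * D <= b ord0 * (c * E).
  have : \sum_(i < n.+1) b ord_max * D <= \sum_i b ord0 * esum_avoid b k i.
    by apply: ler_sum => i _; apply: esum_drop_last_le_avoid.
  rewrite -mulr_sumr sum_esum_avoid sumr_const card_ord -[_ *+ _]mulr_natl mc.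
  by rewrite -(mulrA n.+1%:R) [b ord0 * _]mulrCA ler_pM2l.
rewrite /delta -/D -/E; split; first by rewrite ler_pdivlMr.
rewrite le_min ler_pdivrMr // mul1r D_le_E /= ler_pdivrMr // -mulrA.
by rewrite mulrCA -mulrA ler_pdivlMl ?b_gt0 // -mulrA.
Qed.
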